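(* Let $1\le k\le n$ and $\lambda_0,\dots,\lambda_n\in\mathbb R$. The set of real solutions $(a_0,\dots,a_n)$ of the linear system $$\sum_{i=0}^n a_{i}\frac{\binom{k}{s}\binom{n-k}{i-s}}{\binom{n}{i}}=\sum_{i=0}^n\lambda_i\frac{\binom{k}{s}\binom{n-k}{i-s}}{\binom{n}{i}},\qquad 0\le s\le k,$$ is exactly the set of vectors of the form $$a_r=\sum_{i=k+1}^n(-1)^{k-r+1}\binom{i}{k}\binom{k}{r}\frac{i-k}{i-r}\,s_i+\lambda_r\quad(0\le r\le k),\qquad a_r=s_r+\lambda_r\quad(k+1\le r\le n),$$ with $s_{k+1},\dots,s_n\in\mathbb R$ arbitrary.
   Context: Convention: $\binom{m}{i}=0$ if $i<0$ or $i>m$. *)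

From HB Require Import structures.
From mathcomp Require Import all_boot all_order all_algebra.
From mathcomp Require Import reals.
Set Implicit Arguments. Unset Strict Implicit. Unset Printing Implicit Defensive.
Import Order.TTheory GRing.Theory Num.Theory.
Local Open Scope ring_scope.

Definition binomz (m : nat) (i : int) : nat :=
  match i with Posz j => 'C(m, j) | Negz _ => 0%N end.

Definition sysc (R : fieldType) (n k s i : nat) : R :=
  ('C(k, s) * binomz (n - k) (i%:Z - s%:Z))%:R / ('C(n, i))%:R.

From HB Require Import structures.
From mathcomp Require Import all_boot all_order all_algebra.
From mathcomp Require Import reals.
From mathcomp Require Import ring zify.
Set Implicit Arguments.
Unset Strict Implicit.
Unset Printing Implicit Defensive.

Import Order.TTheory GRing.Theory Num.Theory.
Local Open Scope ring_scope.

(* Write d = a - lam.  By the symmetry C(k,s) C(n-k,i-s) / C(n,i) = C(i,s) C(n-i,k-s) / C(n,k),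
   the system says that d is orthogonal to the values at 0, ..., n of the degree-k
   polynomials x |-> C(x,s) C(n-x,k-s), s = 0, ..., k.  Lagrange interpolation on the nodes
   0, ..., k gives p(j) = - sum_(r <= k) c_(j,r) p(r) for j > k and deg p <= k, where c_(j,r)
   are exactly the coefficients of the theorem; hence every vector of the displayed form is
   orthogonal to all polynomials of degree <= k.  Conversely, d minus the vector of that form
   built from the tail of d is supported on 0, ..., k and still orthogonal to the k + 1
   polynomials above, whose values on 0, ..., k form a triangular matrix with nonzero
   diagonal; so it vanishes. *)

Lemma mul_bin_bin n k s : (s <= k)%N -> ('C(n, k) * 'C(k, s) = 'C(n, s) * 'C(n - s, k - s))%N.
Proof.
move=> le_sk; have [le_kn | lt_nk] := leqP k n; last first.
  rewrite (bin_small lt_nk) mul0n; have [le_sn | lt_ns] := leqP s n.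
    by rewrite (@bin_small (n - s)) ?muln0 //; lia.
  by rewrite bin_small.
have facts_gt0 : (0 < s`! * (k - s)`! * (n - k)`!)%N by rewrite !muln_gt0 !fact_gt0.
apply/eqP; rewrite -(eqn_pmul2r facts_gt0); apply/eqP.
have e : (n - s - (k - s) = n - k)%N by lia.
transitivity n`!.
  by rewrite -(bin_fact le_kn) -(bin_fact le_sk); ring.
rewrite -(bin_fact (leq_trans le_sk le_kn)) -(@bin_fact (n - s) (k - s)) ?e; first ring.
lia.
Qed.

Lemma mul_bin_subC N a b : ('C(N, a) * 'C(N - a, b) = 'C(N, b) * 'C(N - b, a))%N.
Proof.
have := @mul_bin_bin N _ _ (leq_addr b a); have := @mul_bin_bin N _ _ (leq_addl a b).
rewrite addKn addnK => <- <-.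
suff -> : 'C(a + b, a) = 'C(a + b, b) by [].
by rewrite -bin_sub ?leq_addr // addKn.
Qed.

Lemma mul_bin_hypergeomC n k s i : (s <= k)%N -> (k <= n)%N -> (s <= i)%N -> (i <= n)%N ->
  ('C(k, s) * 'C(n - k, i - s) * 'C(n, k) = 'C(i, s) * 'C(n - i, k - s) * 'C(n, i))%N.
Proof.
move=> le_sk le_kn le_si le_in.
have := mul_bin_subC (n - s) (k - s) (i - s).
have -> : (n - s - (k - s) = n - k)%N by lia.
have -> : (n - s - (i - s) = n - i)%N by lia.
move=> sym; transitivity ('C(n, s) * ('C(n - s, k - s) * 'C(n - k, i - s)))%N.
  by rewrite [RHS]mulnA -mul_bin_bin //; ring.
by rewrite sym [LHS]mulnA -mul_bin_bin //; ring.
Qed.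

(* The number of k-subsets of an n-set meeting a fixed i-subset in exactly s points. *)
Definition meet_count (n k s i : nat) : nat := 'C(i, s) * 'C(n - i, k - s).

Lemma syscE (R : numFieldType) n k s i : (s <= k)%N -> (k <= n)%N -> (i <= n)%N ->
  sysc R n k s i = (meet_count n k s i)%:R / ('C(n, k))%:R.
Proof.
move=> le_sk le_kn le_in; rewrite /sysc /meet_count /binomz.
have [le_si | lt_is] := leqP s i; last first.
  have -> : (i%:Z - s%:Z)%R = Negz (s - i).-1.
    by rewrite NegzE prednK ?subn_gt0 // -opprB subzn //; lia.
  by rewrite (bin_small lt_is) muln0 mul0n !mul0r.
have binC_neq0 m j : (j <= m)%N -> ('C(m, j)%:R : R) != 0 by rewrite pnatr_eq0 -lt0n bin_gt0.
rewrite subzn //; apply/eqP; rewrite eqr_div ?binC_neq0 //.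
by rewrite -!natrM mul_bin_hypergeomC.
Qed.

Lemma natr_ffact (R : comNzRingType) (x m : nat) :
  (x ^_ m)%:R = \prod_(l < m) (x%:R - l%:R : R).
Proof.
elim: m => [|m IHm]; first by rewrite big_ord0 ffactn0.
rewrite big_ord_recr /= -IHm ffactnSr natrM.
have [le_mx | lt_xm] := leqP m x; first by rewrite natrB.
by rewrite ffact_small // !mul0r.
Qed.

Lemma size_prod_leq_linear (R : fieldType) (I : finType) (P : pred I) (F : I -> {poly R}) :
  (forall i, P i -> (size (F i) <= 2)%N) -> (size (\prod_(i | P i) F i)%R <= #|P|.+1)%N.
Proof.
move=> sizeF; rewrite -sum1_card.
elim/big_rec2: _ => [|i d p Pi IHp]; first by rewrite size_poly1.
by apply: leq_trans (size_polyMleq _ _) _; have := sizeF i Pi; lia.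
Qed.

Section MeetPoly.

Variable R : numFieldType.

Definition meet_poly (n k s : nat) : {poly R} :=
  ((s`! * (k - s)`!)%:R)^-1 *:
    (\prod_(l < s) ('X - l%:R%:P) * \prod_(l < k - s) ((n%:R - l%:R)%:P - 'X)).

Lemma size_meet_poly n k s : (s <= k)%N -> (size (meet_poly n k s) <= k.+1)%N.
Proof.
move=> le_sk; apply: leq_trans (size_scale_leq _ _) _.
apply: leq_trans (size_polyMleq _ _) _.
have size1 : (size (\prod_(l < s) ('X - (l%:R : R)%:P))%R <= s.+1)%N.
  have := @size_prod_leq_linear R _ xpredT (fun l : 'I_s => 'X - l%:R%:P).
  by rewrite cardT size_enum_ord; apply=> l _; rewrite size_XsubC.
have size2 : (size (\prod_(l < k - s) ((n%:R - l%:R : R)%:P - 'X))%R <= (k - s).+1)%N.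
  have := @size_prod_leq_linear R _ xpredT (fun l : 'I_(k - s) => (n%:R - l%:R)%:P - 'X).
  rewrite cardT size_enum_ord; apply=> l _.
  by rewrite -opprB size_polyN size_XsubC.
apply: (@leq_trans (s.+1 + (k - s).+1).-1); last by lia.
by rewrite -!subn1 leq_sub2r // leq_add.
Qed.

Lemma horner_meet_poly n k s i : (i <= n)%N ->
  (meet_poly n k s).[i%:R] = (meet_count n k s i)%:R.
Proof.
move=> le_in; rewrite /meet_poly hornerZ hornerM !horner_prod.
under eq_bigr do rewrite hornerXsubC.
under [X in _ * (_ * X)]eq_bigr do rewrite hornerD hornerN hornerC hornerX addrAC -natrB //.
rewrite -!natr_ffact /meet_count -!bin_ffact !natrM.
have fact_neq0 m : (m`!%:R : R) != 0 by rewrite pnatr_eq0 -lt0n fact_gt0.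
by rewrite mulrACA mulrC mulfK // mulf_neq0.
Qed.

End MeetPoly.

Lemma prod_natr_sub_skip (R : comNzRingType) (t m : nat) :
  \prod_(i < (t + m).+1 | (i : nat) != t) (t%:R - i%:R : R) = (-1) ^+ m * (t`! * m`!)%:R.
Proof.
rewrite big_mkcond /=; elim: m => [|m IHm].
  rewrite addn0 big_ord_recr /= eqxx mulr1 expr0 mul1r muln1 -ffactnn natr_ffact.
  by apply: eq_bigr => i _; rewrite (ltn_eqF (ltn_ord i)).
rewrite addnS big_ord_recr /= IHm ifT; last by lia.
rewrite factS -addnS !natrM natrD exprS; ring.
Qed.

Section Lagrange.

Variables (R : numFieldType) (k : nat).

Definition lagr (t : 'I_k.+1) : {poly R} := \prod_(i < k.+1 | i != t) ('X - i%:R%:P).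

Lemma size_lagr t : (size (lagr t) <= k.+1)%N.
Proof.
have := @size_prod_leq_linear R _ (predC1 t) (fun i => 'X - i%:R%:P).
by rewrite cardC1 card_ord; apply=> i _; rewrite size_XsubC.
Qed.

Lemma horner_lagr_node t u : u != t -> (lagr t).[u%:R] = 0.
Proof. by move=> ut; rewrite horner_prod (bigD1 u) //= hornerXsubC subrr mul0r. Qed.

Lemma horner_lagr_self t : (lagr t).[t%:R] = (-1) ^+ (k - t) * (t`! * (k - t)`!)%:R.
Proof.
have := prod_natr_sub_skip R t (k - t); rewrite subnKC; last by rewrite -ltnS.
by move=> <-; rewrite horner_prod; apply: eq_big => // i; rewrite hornerXsubC.
Qed.

Lemma horner_lagr_self_neq0 t : (lagr t).[t%:R] != 0.
Proof.
by rewrite horner_lagr_self mulf_eq0 signr_eq0 pnatr_eq0 muln_eq0 !gtn_eqF ?fact_gt0.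
Qed.

Lemma horner_lagr_mulXsub t (j : nat) :
  (lagr t).[j%:R] * (j%:R - t%:R) = (j ^_ k.+1)%:R.
Proof.
rewrite natr_ffact (bigD1 t) //= mulrC horner_prod; congr (_ * _).
by apply: eq_big => // i; rewrite hornerXsubC.
Qed.

Lemma lagr_interpolation (p : {poly R}) : (size p <= k.+1)%N ->
  p = \sum_(t < k.+1) (p.[t%:R] / (lagr t).[t%:R]) *: lagr t.
Proof.
move=> size_p; apply/eqP; rewrite -subr_eq0; apply/eqP.
apply: (@roots_geq_poly_eq0 _ _ [seq i%:R | i : 'I_k.+1]).
- apply/allP => _ /mapP[u _ ->]; rewrite /root hornerD hornerN horner_sum (bigD1 u) //=.
  rewrite big1 => [|t tu]; last first.
    by rewrite eq_sym in tu; rewrite hornerZ (@horner_lagr_node t u tu) mulr0.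
  by rewrite addr0 hornerZ divfK ?horner_lagr_self_neq0 ?subrr.
- by rewrite map_inj_uniq ?enum_uniq // => i j /eqP; rewrite eqr_nat => /eqP /val_inj.
- rewrite size_map size_enum_ord; apply: leq_trans (size_polyD _ _) _.
  rewrite geq_max size_p size_polyN; apply: leq_trans (size_sum _ _ _) _.
  by apply/bigmax_leqP => t _; apply: leq_trans (size_scale_leq _ _) (size_lagr t).
Qed.

Definition extrap_coef (j r : nat) : R :=
  (-1) ^+ (k - r + 1) * ('C(j, k) * 'C(k, r))%:R * ((j - k)%:R / (j - r)%:R).

Lemma horner_lagr_out t (j : nat) : (k < j)%N ->
  (lagr t).[j%:R] = - extrap_coef j t * (lagr t).[t%:R].
Proof.
move=> lt_kj; have le_tk : (t <= k)%N by rewrite -ltnS.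
have le_tj : (t <= j)%N by lia.
have jt_neq0 : (j%:R - t%:R : R) != 0 by rewrite -natrB // pnatr_eq0 subn_eq0 -ltnNge; lia.
rewrite -[LHS](mulfK jt_neq0) horner_lagr_mulXsub horner_lagr_self /extrap_coef.
rewrite ffactnSr -bin_ffact -(bin_fact le_tk) !natrM !natrB ?(ltnW lt_kj) // exprD expr1.
have sign2 : (-1) ^+ (k - t) * (-1) ^+ (k - t) = 1 :> R by rewrite -expr2 sqrr_sign.
by rewrite -[LHS]mul1r -{1}sign2; ring.
Qed.

Lemma horner_extrap (p : {poly R}) (j : nat) : (size p <= k.+1)%N -> (k < j)%N ->
  p.[j%:R] = - \sum_(t < k.+1) extrap_coef j t * p.[t%:R].
Proof.
move=> size_p lt_kj; rewrite [in LHS](lagr_interpolation size_p) horner_sum -sumrN.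
apply: eq_bigr => t _; rewrite hornerZ (horner_lagr_out t lt_kj).
by field; rewrite horner_lagr_self_neq0.
Qed.

End Lagrange.

Section System.

Variables (R : numFieldType) (n k : nat).
Hypothesis le_kn : (k <= n)%N.

Lemma sysc_sumE (x : 'I_n.+1 -> R) s : (s <= k)%N ->
  \sum_(i < n.+1) x i * sysc R n k s i
  = (\sum_(i < n.+1) x i * (meet_count n k s i)%:R) / ('C(n, k))%:R.
Proof.
by move=> le_sk; rewrite mulr_suml; apply: eq_bigr => i _; rewrite syscE ?leq_ord // mulrA.
Qed.

Lemma sysc_eqP (x y : 'I_n.+1 -> R) s : (s <= k)%N ->
  \sum_(i < n.+1) x i * sysc R n k s i = \sum_(i < n.+1) y i * sysc R n k s i <->
  \sum_(i < n.+1) (x i - y i) * (meet_count n k s i)%:R = 0.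
Proof.
move=> le_sk; rewrite !sysc_sumE //.
under [X in _ <-> X = _]eq_bigr do rewrite mulrBl.
have Cnk_neq0 : ('C(n, k)%:R : R)^-1 != 0 by rewrite invr_eq0 pnatr_eq0 -lt0n bin_gt0.
rewrite sumrB; split => [/(mulIf Cnk_neq0) -> | /eqP]; first by rewrite subrr.
by rewrite subr_eq0 => /eqP ->.
Qed.

Definition extrap_vec (t : 'I_n.+1 -> R) (r : 'I_n.+1) : R :=
  if (r <= k)%N then \sum_(i < n.+1 | (k < i)%N) extrap_coef R k i r * t i else t r.

Lemma sum_extrap_vec_horner (t : 'I_n.+1 -> R) (p : {poly R}) : (size p <= k.+1)%N ->
  \sum_(r < n.+1) extrap_vec t r * p.[r%:R] = 0.
Proof.
move=> size_p; rewrite (bigID (fun r : 'I_n.+1 => (r <= k)%N)) /=.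
under eq_bigr => r le_rk do rewrite /extrap_vec le_rk mulr_suml.
under [X in _ + X]eq_bigr => r gt_rk do rewrite /extrap_vec (negbTE gt_rk).
rewrite [X in _ + X](eq_bigl (fun r : 'I_n.+1 => (k < r)%N)) => [|r]; last by rewrite ltnNge.
rewrite exchange_big -big_split big1 //= => i lt_ki.
suff -> : \sum_(r < n.+1 | (r <= k)%N) extrap_coef R k i r * t i * p.[r%:R]
          = - (t i * p.[i%:R]) by rewrite addNr.
rewrite (horner_extrap size_p lt_ki) mulrN opprK mulr_sumr.
rewrite (big_ord_widen n.+1 (fun r => t i * (extrap_coef R k i r * p.[r%:R]))) //.
by apply: eq_bigr => r _; rewrite mulrCA mulrA.
Qed.

Lemma sum_extrap_vec_meet_count (t : 'I_n.+1 -> R) s : (s <= k)%N ->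
  \sum_(r < n.+1) extrap_vec t r * (meet_count n k s r)%:R = 0.
Proof.
move=> le_sk; rewrite -[RHS](sum_extrap_vec_horner t (size_meet_poly R n le_sk)).
by apply: eq_bigr => r _; rewrite horner_meet_poly ?leq_ord.
Qed.

(* Triangularity: meet_count n k s i vanishes for i < s and is positive for i = s. *)
Lemma meet_count_orthogonal_eq0 (g : 'I_n.+1 -> R) :
  (forall r : 'I_n.+1, (k < r)%N -> g r = 0) ->
  (forall s, (s <= k)%N -> \sum_(i < n.+1) g i * (meet_count n k s i)%:R = 0) ->
  forall r, g r = 0.
Proof.
move=> g_high g_orth.
suff g0 m (r : 'I_n.+1) : (k.+1 - m <= r)%N -> g r = 0.
  by move=> r; apply: (g0 k.+1); rewrite subnn.
elim: m r => [|m IHm] r le_r; first by apply: g_high; rewrite subn0 in le_r.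
have [|lt_r] := leqP (k.+1 - m) r; first exact: IHm.
have le_rk : (r <= k)%N by lia.
have := g_orth r le_rk; rewrite (bigD1 r) //= big1 => [|i ir]; last first.
  have [lt_ir | le_ri] := ltnP i r; first by rewrite /meet_count bin_small // mul0n mulr0.
  have {}ir : (i : nat) != r := ir.
  by rewrite IHm ?mul0r //; lia.
rewrite addr0 /meet_count binn mul1n => /eqP; rewrite mulf_eq0 pnatr_eq0 => /orP[/eqP //|].
have : (0 < 'C(n - r, k - r))%N by rewrite bin_gt0 leq_sub2r.
by rewrite lt0n => /negbTE ->.
Qed.

Lemma extrap_vecE (d : 'I_n.+1 -> R) :
  (forall s, (s <= k)%N -> \sum_(i < n.+1) d i * (meet_count n k s i)%:R = 0) ->
  forall r, d r = extrap_vec d r.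
Proof.
move=> d_orth r; apply/eqP; rewrite -subr_eq0; apply/eqP; move: r.
apply: meet_count_orthogonal_eq0 => [r lt_kr | s le_sk].
  by rewrite /extrap_vec leqNgt lt_kr subrr.
under eq_bigr do rewrite mulrBl.
by rewrite sumrB d_orth // sum_extrap_vec_meet_count // subr0.
Qed.

End System.

Theorem mainTheorem16 (R : realType) (n k : nat) (hk1 : (1 <= k)%N) (hkn : (k <= n)%N)
    (lam : 'I_n.+1 -> R) (a : 'I_n.+1 -> R) :
  (forall s : 'I_k.+1,
     \sum_(i < n.+1) a i * sysc R n k s i = \sum_(i < n.+1) lam i * sysc R n k s i)
  <->
  (exists t : 'I_n.+1 -> R,
     (forall r : 'I_n.+1, (r <= k)%N ->
        a r = \sum_(i < n.+1 | (k < i)%N)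
                (-1) ^+ (k - r + 1) * ('C(i, k) * 'C(k, r))%:R
                  * ((i - k)%:R / (i - r)%:R) * t i + lam r) /\
     (forall r : 'I_n.+1, (k < r)%N -> a r = t r + lam r)).
Proof.
split=> [sys | [t [t_low t_high]] s].
- exists (fun i => a i - lam i).
  have d_eq := extrap_vecE hkn (fun s le_sk =>
    (sysc_eqP hkn a lam le_sk).1 (sys (Ordinal (le_sk : (s < k.+1)%N)))).
  by split=> r r_k; apply/(canRL (subrK (lam r))); rewrite d_eq /extrap_vec ?r_k // leqNgt r_k.
- apply/(sysc_eqP hkn a lam (leq_ord s)).
  rewrite -[RHS](sum_extrap_vec_meet_count hkn t (leq_ord s)); apply: eq_bigr => r _.
  rewrite /extrap_vec; case: (leqP r k) => r_k.
    by rewrite (t_low r r_k) addrK.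
  by rewrite (t_high r r_k) addrK.
Qed.
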